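(* Let $A$ be a unital involutive $k$-algebra. The $k$-submodule of $A$ spanned by all elements $a_0a_1a_2-a_2\overline{a_1}a_0$, with $a_0,a_1,a_2\in A$, is a two-sided ideal of $A$.
   Context: $k$ is a commutative ring. An involutive $k$-algebra is a unital associative $k$-algebra with a $k$-linear map $a\mapsto\overline a$ satisfying $\overline{\overline a}=a$, $\overline{ab}=\overline b\,\overline a$ and $\overline1=1$. *)

From HB Require Import structures.
From mathcomp Require Import all_boot all_order all_algebra.
Set Implicit Arguments. Unset Strict Implicit. Unset Printing Implicit Defensive.
Import GRing.Theory.
Local Open Scope ring_scope.

Definition is_involution (k : comPzRingType) (A : algType k) (bar : A -> A) :=
  [/\ forall (c : k) (x y : A), bar (c *: x + y) = c *: bar x + bar y,
      forall x : A, bar (bar x) = x,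
      forall x y : A, bar (x * y) = bar y * bar x
    & bar 1 = 1].

Definition kspan (k : comPzRingType) (A : algType k) (I : Type) (g : I -> A)
  : A -> Prop :=
  fun x => exists s : seq (k * I), x = \sum_(p <- s) p.1 *: g p.2.

Definition two_sided_ideal (A : pzRingType) (J : A -> Prop) :=
  [/\ J 0,
      forall x y, J x -> J y -> J (x + y),
      forall x, J x -> J (- x),
      forall a x, J x -> J (a * x)
    & forall a x, J x -> J (x * a)].

From mathcomp Require Import all_boot all_algebra.
Set Implicit Arguments. Unset Strict Implicit. Unset Printing Implicit Defensive.
Import GRing.Theory.
Local Open Scope ring_scope.

(* Write [a, b, c] := a b c - c b' a, where b' is the involute of b.  Each
   generator is a difference of two monomials, and multiplying it by x on
   either side gives a difference that telescopes into three generators: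
     x [a, b, c] = [x, ab, c] + [c b', 1, a' x] + [1, a', x c b'],
     [a, b, c] x = [1, a, bcx] + [bc, 1, x a'] + [x, a' b, c]. *)

Section KSpan.
Variables (k : comPzRingType) (A : algType k) (I : Type) (g : I -> A).

Lemma kspan0 : kspan g 0.
Proof. by exists [::]; rewrite big_nil. Qed.

Lemma kspanD x y : kspan g x -> kspan g y -> kspan g (x + y).
Proof. by move=> [s ->] [t ->]; exists (s ++ t); rewrite big_cat. Qed.

Lemma kspanZ c x : kspan g x -> kspan g (c *: x).
Proof.
move=> [s ->]; exists [seq (c * p.1, p.2) | p <- s].
by rewrite big_map scaler_sumr; apply: eq_bigr => p _; rewrite scalerA.
Qed.

Lemma kspanN x : kspan g x -> kspan g (- x).
Proof. by rewrite -scaleN1r; apply: kspanZ. Qed.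

Lemma kspan_gen i : kspan g (g i).
Proof. by exists [:: (1, i)]; rewrite big_seq1 scale1r. Qed.

Lemma kspan_mull_closed :
  (forall a i, kspan g (a * g i)) -> forall a x, kspan g x -> kspan g (a * x).
Proof.
move=> mulg a x [s ->]; rewrite mulr_sumr.
elim: s => [|p s IHs]; first by rewrite big_nil; apply: kspan0.
by rewrite big_cons -scalerAr; apply: kspanD => //; apply: kspanZ.
Qed.

Lemma kspan_mulr_closed :
  (forall a i, kspan g (g i * a)) -> forall a x, kspan g x -> kspan g (x * a).
Proof.
move=> gmul a x [s ->]; rewrite mulr_suml.
elim: s => [|p s IHs]; first by rewrite big_nil; apply: kspan0.
by rewrite big_cons -scalerAl; apply: kspanD => //; apply: kspanZ.
Qed.

End KSpan.

Section TwistedComm.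
Variables (k : comPzRingType) (A : algType k) (bar : A -> A).
Hypotheses (barK : involutive bar)
           (barM : forall x y, bar (x * y) = bar y * bar x)
           (bar1 : bar 1 = 1).

Definition twisted_comm (a b c : A) := a * b * c - c * bar b * a.

Definition twisted_comm_span :=
  kspan (fun t : A * A * A => twisted_comm t.1.1 t.1.2 t.2).

Lemma twisted_comm_span_gen a b c : twisted_comm_span (twisted_comm a b c).
Proof. exact: (kspan_gen _ (a, b, c)). Qed.

Lemma twisted_comm_span_add3 a b c a' b' c' a'' b'' c'' :
  twisted_comm_span
    (twisted_comm a b c + twisted_comm a' b' c' + twisted_comm a'' b'' c'').
Proof. by apply: kspanD; [apply: kspanD|]; apply: twisted_comm_span_gen. Qed.

Lemma mulr_twisted_comm x a b c :
  x * twisted_comm a b c =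
  twisted_comm x (a * b) c + twisted_comm (c * bar b) 1 (bar a * x)
  + twisted_comm 1 (bar a) (x * c * bar b).
Proof.
rewrite /twisted_comm barM barK bar1 mulrBr !mulr1 !mul1r !mulrA.
by rewrite !addrA !subrK.
Qed.

Lemma twisted_comm_mulr x a b c :
  twisted_comm a b c * x =
  twisted_comm 1 a (b * c * x) + twisted_comm (b * c) 1 (x * bar a)
  + twisted_comm x (bar a * b) c.
Proof.
rewrite /twisted_comm barM barK bar1 mulrBl !mulr1 !mul1r !mulrA.
by rewrite !addrA !subrK.
Qed.

Lemma twisted_comm_span_ideal : two_sided_ideal twisted_comm_span.
Proof.
split; [exact: kspan0 | exact: kspanD | exact: kspanN | |].
- apply: kspan_mull_closed => x [[a b] c] /=.
  by rewrite mulr_twisted_comm; apply: twisted_comm_span_add3.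
- apply: kspan_mulr_closed => x [[a b] c] /=.
  by rewrite twisted_comm_mulr; apply: twisted_comm_span_add3.
Qed.

End TwistedComm.

Theorem lemma5p7 (k : comPzRingType) (A : algType k) (bar : A -> A) :
  is_involution bar ->
  two_sided_ideal
    (kspan (fun t : A * A * A => t.1.1 * t.1.2 * t.2 - t.2 * bar t.1.2 * t.1.1)).
Proof.
by case=> _ barK barM bar1; exact: (twisted_comm_span_ideal barK barM bar1).
Qed.
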